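(* Let $m=2k$ with $k$ a positive integer, let $n$ be a positive integer, and let $\{B_1,\dots,B_{k(n-1)+1}\}$ be a basis for $\Gamma_{k,n}$. For each $i$, let $\hat B_i$ be the $m\times n$ matrix $\begin{pmatrix} B_i\\ B_i^\pi\end{pmatrix}$ (the $k\times n$ block $B_i$ stacked on top of the $k\times n$ block $B_i^\pi$). Then $\{\hat B_1,\dots,\hat B_{k(n-1)+1}\}$ is a basis for $\Gamma^\pi_{m,n}$.
   Context: A real matrix is stochastic if its entries are nonnegative and each row sums to $1$. $\Gamma_{k,n}$ is the set of $k\times n$ stochastic matrices. For $A=(a_{i,j})\in M_{p,n}$, $A^\pi$ is the $p\times n$ matrix with $(A^\pi)_{i,j}=a_{p+1-i,n+1-j}$; $A$ is centrosymmetric if $A=A^\pi$. $\Gamma^\pi_{m,n}$ is the set of $m\times n$ centrosymmetric stochastic matrices; it is an affine set of dimension $k(n-1)$. A basis for such a set $\Gamma$ of affine dimension $d$ means a set of $d+1$ linearly independent elements of $\Gamma$ whose linear span contains $\Gamma$. *)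

From mathcomp Require Import all_boot all_order all_algebra.
Set Implicit Arguments. Unset Strict Implicit. Unset Printing Implicit Defensive.
Import Order.TTheory GRing.Theory Num.Theory.
Local Open Scope ring_scope.

Definition stochastic (R : realFieldType) (p n : nat) (A : 'M[R]_(p, n)) : Prop :=
  (forall i j, 0 <= A i j) /\ (forall i, \sum_(j < n) A i j = 1).

Definition Gamma (R : realFieldType) (p n : nat) : 'M[R]_(p, n) -> Prop :=
  fun A => stochastic A.

Definition mxpi (R : realFieldType) (p n : nat) (A : 'M[R]_(p, n)) : 'M[R]_(p, n) :=
  \matrix_(i < p, j < n) A (rev_ord i) (rev_ord j).

Definition centrosymmetric (R : realFieldType) (p n : nat) (A : 'M[R]_(p, n)) : Prop :=
  A = mxpi A.

Definition GammaPi (R : realFieldType) (p n : nat) : 'M[R]_(p, n) -> Prop :=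
  fun A => stochastic A /\ centrosymmetric A.

(* A family B_0..B_{N-1} is a basis of the set S (of affine dimension N-1):
   its members lie in S, are linearly independent, and their linear span
   contains S. *)
Definition affine_basis (R : realFieldType) (p n N : nat)
    (S : 'M[R]_(p, n) -> Prop) (B : 'I_N -> 'M[R]_(p, n)) : Prop :=
  [/\ forall i, S (B i),
      (forall c : 'I_N -> R, \sum_(i < N) c i *: B i = 0 -> forall i, c i = 0)
    & forall A, S A -> exists c : 'I_N -> R, A = \sum_(i < N) c i *: B i].

(* A centrosymmetric 2k x n matrix is the stack of its upper half X over
X^pi, and it is stochastic exactly when X is.  The map X |-> (X over X^pi) is
linear and injective, so it carries a basis of Gamma_{k,n} to a basis of
Gamma^pi_{2k,n}. *)
From mathcomp Require Import all_boot all_order all_algebra.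
From mathcomp Require Import zify.
Set Implicit Arguments. Unset Strict Implicit. Unset Printing Implicit Defensive.
Import GRing.Theory Num.Theory.
Local Open Scope ring_scope.

Lemma rev_ord_lshift k (a : 'I_k) : rev_ord (lshift k a) = rshift k (rev_ord a).
Proof. by apply/val_inj => /=; have := ltn_ord a; lia. Qed.

Lemma rev_ord_rshift k (a : 'I_k) : rev_ord (rshift k a) = lshift k (rev_ord a).
Proof. by apply/val_inj => /=; have := ltn_ord a; lia. Qed.

Section Mxpi.
Variables (R : realFieldType) (n : nat).

Lemma mxpiE p (A : 'M[R]_(p, n)) : mxpi A = mxsub (@rev_ord p) (@rev_ord n) A.
Proof. by []. Qed.

Lemma mxpiK p : involutive (@mxpi R p n).
Proof. by move=> A; apply/matrixP => i j; rewrite !mxE !rev_ordK. Qed.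

Lemma mxpi_sum p N (c : 'I_N -> R) (A : 'I_N -> 'M[R]_(p, n)) :
  mxpi (\sum_(l < N) c l *: A l) = \sum_(l < N) c l *: mxpi (A l).
Proof. by rewrite mxpiE linear_sum; apply: eq_bigr => l _; rewrite linearZ. Qed.

Lemma mxpi_col_mx k (X Y : 'M[R]_(k, n)) :
  mxpi (col_mx X Y) = col_mx (mxpi Y) (mxpi X).
Proof.
apply/matrixP => i j; rewrite mxE -[i]splitK.
case: (split i) => a /=.
- by rewrite rev_ord_lshift col_mxEu col_mxEd mxE.
- by rewrite rev_ord_rshift col_mxEu col_mxEd mxE.
Qed.

Lemma centrosymmetric_col_mx_mxpi k (X : 'M[R]_(k, n)) :
  centrosymmetric (col_mx X (mxpi X)).
Proof. by rewrite /centrosymmetric mxpi_col_mx mxpiK. Qed.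

Lemma centrosymmetric_col_mx_usubmx k (A : 'M[R]_(k + k, n)) :
  centrosymmetric A -> A = col_mx (usubmx A) (mxpi (usubmx A)).
Proof.
move=> cA; rewrite -[A in LHS]vsubmxK; congr col_mx.
by rewrite [A in LHS]cA -[A in mxpi A]vsubmxK mxpi_col_mx col_mxKd.
Qed.

Lemma stochastic_mxpi p (A : 'M[R]_(p, n)) : stochastic A -> stochastic (mxpi A).
Proof.
case=> A_ge0 A_sum1; split=> [i j|i]; rewrite ?mxE //.
rewrite -(A_sum1 (rev_ord i)) (reindex_inj rev_ord_inj) /=.
by apply: eq_bigr => j _; rewrite mxE rev_ordK.
Qed.

Lemma stochastic_col_mx p1 p2 (X : 'M[R]_(p1, n)) (Y : 'M[R]_(p2, n)) :
  stochastic X -> stochastic Y -> stochastic (col_mx X Y).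
Proof.
case=> X_ge0 X_sum1 [Y_ge0 Y_sum1]; split=> [i j|i];
  rewrite -[i]splitK; case: (split i) => a /=.
- by rewrite col_mxEu.
- by rewrite col_mxEd.
- by rewrite -(X_sum1 a); apply: eq_bigr => j _; rewrite col_mxEu.
- by rewrite -(Y_sum1 a); apply: eq_bigr => j _; rewrite col_mxEd.
Qed.

Lemma stochastic_usubmx p1 p2 (A : 'M[R]_(p1 + p2, n)) :
  stochastic A -> stochastic (usubmx A).
Proof.
case=> A_ge0 A_sum1; split=> [i j|i]; first by rewrite mxE.
by rewrite -(A_sum1 (lshift p2 i)); apply: eq_bigr => j _; rewrite mxE.
Qed.

Lemma sum_scale_col_mx_mxpi k N (c : 'I_N -> R) (B : 'I_N -> 'M[R]_(k, n)) :
  \sum_(l < N) c l *: col_mx (B l) (mxpi (B l))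
  = col_mx (\sum_(l < N) c l *: B l) (mxpi (\sum_(l < N) c l *: B l)).
Proof.
rewrite mxpi_sum -[LHS]vsubmxK !linear_sum.
congr col_mx; apply: eq_bigr => l _; rewrite linearZ /=.
- by rewrite col_mxKu.
- by rewrite col_mxKd.
Qed.

End Mxpi.

Theorem mainTheorem9 (R : realFieldType) (k n : nat) (hk : (0 < k)%N) (hn : (0 < n)%N)
    (B : 'I_(k * (n - 1) + 1) -> 'M[R]_(k, n)) :
  affine_basis (@Gamma R k n) B ->
  affine_basis (@GammaPi R (k + k) n) (fun i => col_mx (B i) (mxpi (B i))).
Proof.
case=> B_in B_free B_span; split.
- move=> i; split; last exact: centrosymmetric_col_mx_mxpi.
  by apply: stochastic_col_mx; [|apply: stochastic_mxpi]; exact: B_in.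
- move=> c; rewrite sum_scale_col_mx_mxpi => /eqP.
  by rewrite col_mx_eq0 => /andP[/eqP /B_free].
- move=> A [A_stoch A_centro].
  have [c Ec] := B_span _ (stochastic_usubmx A_stoch).
  exists c; rewrite sum_scale_col_mx_mxpi -Ec.
  exact: centrosymmetric_col_mx_usubmx.
Qed.
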